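(* For $w\in\Sigma^*$ the following are equivalent: (i) $w$ contains no letter square; (ii) every scattered factor $u$ of $w$ with $|C(w,u)|=1$ has exactly one embedding in $w$.
   Context: A letter square of $w$ is a factor $\mathtt{a}\mathtt{a}$ of $w$ for some letter $\mathtt{a}\in\Sigma$. An embedding of $u$ in $w$ is a map $e:\{1,\dots,|u|\}\to\{1,\dots,|w|\}$ with $e(1)<\dots<e(|u|)$ and $u[i]=w[e(i)]$. The shuffle $\mathrm{Sh}(u,v)$ is the set of words of length $|u|+|v|$ admitting an embedding of $u$ and one of $v$ with disjoint images covering all positions, and $C(w,u)=\{v\in\Sigma^{|w|-|u|}: w\in\mathrm{Sh}(u,v)\}$. *)

From mathcomp Require Import all_boot.
Set Implicit Arguments. Unset Strict Implicit. Unset Printing Implicit Defensive.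

Definition has_letter_square (Sigma : finType) (w : seq Sigma) : Prop :=
  exists a : Sigma, infix [:: a; a] w.

(* e : {1..|u|} -> {1..|w|} (0-indexed here) is an embedding of u in w. *)
Definition is_embedding (Sigma : finType) (u w : seq Sigma)
    (e : 'I_(size u) -> 'I_(size w)) : Prop :=
  (forall i j : 'I_(size u), i < j -> e i < e j) /\
  (forall i : 'I_(size u), tnth (in_tuple u) i = tnth (in_tuple w) (e i)).

Definition in_shuffle (Sigma : finType) (u v w : seq Sigma) : Prop :=
  size w = size u + size v /\
  exists (e1 : 'I_(size u) -> 'I_(size w)) (e2 : 'I_(size v) -> 'I_(size w)),
    is_embedding e1 /\ is_embedding e2 /\
    (forall k : 'I_(size w), (exists i, e1 i = k) <-> ~ (exists j, e2 j = k)).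

Definition in_C (Sigma : finType) (w u v : seq Sigma) : Prop :=
  size v = size w - size u /\ in_shuffle u v w.

Definition C_card_one (Sigma : finType) (w u : seq Sigma) : Prop :=
  exists v, in_C w u v /\ forall v', in_C w u v' -> v' = v.

Definition unique_embedding (Sigma : finType) (u w : seq Sigma) : Prop :=
  (exists e : 'I_(size u) -> 'I_(size w), is_embedding e) /\
  (forall e1 e2 : 'I_(size u) -> 'I_(size w),
      is_embedding e1 -> is_embedding e2 -> e1 =1 e2).

From mathcomp Require Import all_boot.
Set Implicit Arguments. Unset Strict Implicit. Unset Printing Implicit Defensive.

(* An embedding of u in w is encoded by the bitmask m of its image, so that
   mask m w = u and C(w, u) is the set of complements mask (map negb m) w.
   If w has no letter square, two distinct masks selecting u yield two masks
   selecting u with distinct complements: where the masks first disagree, one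
   selects a letter a at the head of the remaining suffix a z a w' and the
   other selects the a after z; swapping these two choices turns the
   complement a z .. into z a .., and z a = a z would force a letter square.
   Conversely, for w = w1 a a w2 the word u = w1 a w2 embeds in two ways,
   while C(w, u) = {a} since u ++ v must be a permutation of w. *)

Definition ord_ltn (n : nat) : rel 'I_n := relpre val ltn.

Lemma ord_ltn_trans n : transitive (@ord_ltn n).
Proof. by move=> j i k; apply: ltn_trans. Qed.

Lemma sorted_enum_ord n : sorted (@ord_ltn n) (enum 'I_n).
Proof. by rewrite -sorted_map val_enum_ord iota_ltn_sorted. Qed.

Section EmbeddingMask.
Variables (Sigma : finType) (u w : seq Sigma).
Implicit Type e : 'I_(size u) -> 'I_(size w).

Definition emb_image e : seq 'I_(size w) := map e (enum 'I_(size u)).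

Definition emb_mask e : bitseq := [seq j \in emb_image e | j <- enum 'I_(size w)].

Lemma size_emb_mask e : size (emb_mask e) = size w.
Proof. by rewrite size_map size_enum_ord. Qed.

Lemma eq_emb_mask e1 e2 : e1 =1 e2 -> emb_mask e1 = emb_mask e2.
Proof. by move=> e12; rewrite /emb_mask /emb_image (eq_map e12). Qed.

Lemma emb_maskP e (k : 'I_(size w)) :
  reflect (exists i, e i = k) (nth false (emb_mask e) k).
Proof.
rewrite (nth_map k) ?size_enum_ord // nth_ord_enum.
by apply: (iffP mapP) => [[i _ ->]|[i <-]]; exists i; rewrite ?mem_enum.
Qed.

Lemma mask_emb_mask_enum e :
  is_embedding e -> mask (emb_mask e) (enum 'I_(size w)) = emb_image e.
Proof.
move=> [e_incr _]; rewrite -filter_mask.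
apply: (irr_sorted_eq (@ord_ltn_trans _)) => [i||| j].
- exact: ltnn.
- exact/sorted_filter/sorted_enum_ord/ord_ltn_trans.
- rewrite sorted_map; apply: sub_sorted (sorted_enum_ord _) => i j; exact: e_incr.
- by rewrite mem_filter mem_enum andbT.
Qed.

Lemma mask_emb_mask e : is_embedding e -> mask (emb_mask e) w = u.
Proof.
move=> emb_e; have [_ e_letters] := emb_e.
have enum_u : map (tnth (in_tuple u)) (enum 'I_(size u)) = u := map_tnth_enum _.
have enum_w : map (tnth (in_tuple w)) (enum 'I_(size w)) = w := map_tnth_enum _.
rewrite -[in RHS]enum_u -[in LHS]enum_w -map_mask mask_emb_mask_enum // -map_comp.
by apply: eq_map => i /=; rewrite e_letters.
Qed.

Lemma emb_mask_inj e1 e2 : is_embedding e1 -> is_embedding e2 ->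
  emb_mask e1 = emb_mask e2 -> e1 =1 e2.
Proof.
move=> emb_e1 emb_e2 e12 i.
have /eq_in_map e12_in : emb_image e1 = emb_image e2.
  by rewrite -!mask_emb_mask_enum // e12.
by apply: e12_in; rewrite mem_enum.
Qed.

Lemma embedding_of_mask m : size m = size w -> mask m w = u ->
  exists2 e, is_embedding e & emb_mask e = m.
Proof.
move=> size_m mask_m.
set J := mask m (enum 'I_(size w)).
have size_J : size J == size u.
  by rewrite -mask_m !size_mask ?size_enum_ord.
pose t : (size u).-tuple 'I_(size w) := Tuple size_J.
have m_enum : [seq nth false m j | j : 'I_(size w) <- enum 'I_(size w)] = m.
  by rewrite -[in RHS](mkseq_nth false m) size_m /mkseq -val_enum_ord -map_comp.
have J_filter : J = [seq j : 'I_(size w) <- enum 'I_(size w) | nth false m j].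
  by rewrite filter_mask m_enum.
exists (tnth t); first split.
- move=> i j lt_ij; pose j0 := tnth t i; rewrite !(tnth_nth j0).
  have sorted_J : sorted (@ord_ltn (size w)) J.
    by rewrite J_filter; exact/sorted_filter/sorted_enum_ord/ord_ltn_trans.
  by apply: (sorted_ltn_nth (@ord_ltn_trans _)); rewrite ?inE ?size_tuple.
- move=> i; pose a0 := tnth (in_tuple w) (tnth t i); rewrite !(tnth_nth a0) /=.
  have enum_w : map (tnth (in_tuple w)) (enum 'I_(size w)) = w := map_tnth_enum _.
  rewrite -[X in nth a0 X _]mask_m -[in mask _ w]enum_w -map_mask -/J.
  rewrite (nth_map (tnth t i)) ?(eqP size_J) //.
  have -> : nth (tnth t i) J i = tnth t i by rewrite [RHS](tnth_nth (tnth t i)).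
  by rewrite (tnth_nth a0).
have image_t : emb_image (tnth t) = J by rewrite /emb_image map_tnth_enum.
rewrite -m_enum; apply: eq_map => j.
by rewrite image_t J_filter mem_filter mem_enum andbT.
Qed.
End EmbeddingMask.

Section ShuffleMask.
Variable Sigma : finType.
Implicit Types (u v w : seq Sigma) (m : bitseq).

Lemma size_mask_negb w m : size m = size w ->
  size (mask m w) + size (mask (map negb m) w) = size w.
Proof.
by move=> size_m; rewrite !size_mask ?size_map // -size_m -(count_predC id m) count_map.
Qed.

Lemma in_shuffle_mask w m : size m = size w ->
  in_shuffle (mask m w) (mask (map negb m) w) w.
Proof.
move=> size_m; split; first by rewrite size_mask_negb.
have [e1 emb_e1 mask_e1] := embedding_of_mask size_m erefl.
have size_m' : size (map negb m) = size w by rewrite size_map.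
have [e2 emb_e2 mask_e2] := embedding_of_mask size_m' erefl.
exists e1, e2; do 2!split=> //; move=> k.
move: (emb_maskP e1 k) (emb_maskP e2 k).
rewrite mask_e1 mask_e2 (nth_map false) ?size_m //.
case: (nth false m k) => /= /rwP e1k /rwP e2k.
  by split=> [_ /e2k | _]; last exact/e1k.
by split=> [/e1k | ne2k] //; exfalso; apply/ne2k/e2k.
Qed.

Lemma in_shuffleP u v w : in_shuffle u v w ->
  exists m, [/\ size m = size w, mask m w = u & mask (map negb m) w = v].
Proof.
move=> [_ [e1 [e2 [emb_e1 [emb_e2 image_e12]]]]].
exists (emb_mask e1); split; [exact: size_emb_mask | exact: mask_emb_mask |].
suff -> : map negb (emb_mask e1) = emb_mask e2 by exact: mask_emb_mask.
apply: (@eq_from_nth _ false); rewrite size_map !size_emb_mask // => k lt_k.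
rewrite (nth_map false) ?size_emb_mask //.
have := image_e12 (Ordinal lt_k).
move: (emb_maskP e1 (Ordinal lt_k)) (emb_maskP e2 (Ordinal lt_k)) => /=.
case: (nth false (emb_mask e1) k) (nth false (emb_mask e2) k) => [] [] // e1k e2k.
  by case=> to2 _; case: (to2 (elimT e1k isT)); exact: elimT e2k isT.
by case=> _ of2; case: (elimF e1k erefl); exact: of2 (elimF e2k erefl).
Qed.

Lemma in_C_mask w m : size m = size w -> in_C w (mask m w) (mask (map negb m) w).
Proof.
move=> size_m; split; last exact: in_shuffle_mask.
by rewrite -[in size w - _](size_mask_negb size_m) addKn.
Qed.

Lemma perm_mask_negb w m : size m = size w ->
  perm_eq w (mask m w ++ mask (map negb m) w).
Proof.
elim: w m => [|a w IHw] [|[] m] //= [/IHw perm_w]; first by rewrite perm_cons.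
by rewrite perm_sym -cat1s perm_catCA /= perm_cons perm_sym.
Qed.
End ShuffleMask.

Section LetterSquareFree.
Variable Sigma : finType.
Implicit Types (a b : Sigma) (w s : seq Sigma) (m r : bitseq).

Lemma no_letter_square_behead a w :
  ~ has_letter_square (a :: w) -> ~ has_letter_square w.
Proof.
by move=> sqfree [b sq_b]; apply: sqfree; exists b; rewrite infix_consl sq_b orbT.
Qed.

Lemma letter_square_cons2 a w : has_letter_square [:: a, a & w].
Proof. by exists a; apply/infixP; exists [::], w. Qed.

Lemma mask_eq_cons r w b s : size r = size w -> mask r w = b :: s ->
  exists z w' r', [/\ w = z ++ b :: w', r = nseq (size z) false ++ true :: r',
                      size r' = size w' & mask r' w' = s].
Proof.
elim: w r => [|x w IHw] [|[] r] //= [size_r].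
  by case=> <- <-; exists [::], w, r.
by case/(IHw _ size_r) => z [w' [r' [-> -> ? ?]]]; exists (x :: z), w', r'.
Qed.

Lemma shift_first_letter a w r s : ~ has_letter_square (a :: w) ->
  size r = size w -> mask r w = a :: s ->
  exists2 m, size m = size (a :: w) & mask m (a :: w) = a :: s /\
    mask (map negb m) (a :: w) != mask (map negb (false :: r)) (a :: w).
Proof.
move=> sqfree size_r /(mask_eq_cons size_r) [z [w' [r' [w_def -> size_r' mask_r']]]].
exists (true :: nseq (size z) false ++ false :: r').
  by rewrite w_def /= !size_cat /= size_nseq size_r'.
rewrite w_def /= mask_cat ?size_nseq // mask_false /= mask_r'; split=> //.
rewrite !map_cat /= !map_nseq !mask_cat ?size_nseq // !mask_true ?size_nseq //=.
apply: contra_not_neq sqfree; rewrite w_def.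
by case: z {w_def} => [_|c z [-> _]]; exact: letter_square_cons2.
Qed.

Lemma distinct_masks_distinct_complements w m m' : ~ has_letter_square w ->
  size m = size w -> size m' = size w -> mask m w = mask m' w -> m != m' ->
  exists m1 m2, [/\ size m1 = size w, size m2 = size w,
    mask m1 w = mask m w, mask m2 w = mask m w &
    mask (map negb m1) w != mask (map negb m2) w].
Proof.
elim: w m m' => [|a w IHw] [|x r] [|x' r'] //= sqfree [size_r] [size_r'].
have [<-|] := eqVneq x x'.
  have sqfree_w := no_letter_square_behead sqfree.
  move=> mask_rr' ne_rr'; have {}mask_rr' : mask r w = mask r' w.
    by move: mask_rr'; case: (x) => // -[].
  have [|m1 [m2 [size_m1 size_m2 mask_m1 mask_m2 ne_m12]]] :=
    IHw _ _ sqfree_w size_r size_r' mask_rr'.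
    by apply: contraNneq ne_rr' => ->.
  exists (x :: m1), (x :: m2); rewrite /= size_m1 size_m2 mask_m1 mask_m2.
  by split=> //; case: (x) => //=; rewrite eqseq_cons eqxx.
case: x x' => [] [] //= _ mask_rr' _.
  have [m1 size_m1 [mask_m1 ne_m1]] :=
    shift_first_letter sqfree size_r' (esym mask_rr').
  by exists m1, (false :: r'); split; rewrite //= size_r'.
have [m2 size_m2 [mask_m2 ne_m2]] := shift_first_letter sqfree size_r mask_rr'.
by exists (false :: r), m2; split; rewrite //= ?size_r ?mask_m2 // eq_sym.
Qed.
End LetterSquareFree.

Lemma unique_embedding_of_C_card_one (Sigma : finType) (w u : seq Sigma) :
  ~ has_letter_square w ->
  subseq u w -> C_card_one w u -> unique_embedding u w.
Proof.
move=> sqfree /subseqP [m size_m u_def] [v [_ C_eq_v]].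
split; first by have [e emb_e _] := embedding_of_mask size_m (esym u_def); exists e.
move=> e1 e2 emb_e1 emb_e2; apply: emb_mask_inj => //; apply/eqP/contraT => ne12.
have mask_e12 : mask (emb_mask e1) w = mask (emb_mask e2) w.
  by rewrite !mask_emb_mask.
have [m1 [m2 [size_m1 size_m2]]] := distinct_masks_distinct_complements
  sqfree (size_emb_mask e1) (size_emb_mask e2) mask_e12 ne12.
rewrite mask_emb_mask // => mask_m1 mask_m2.
have C_m1 := in_C_mask size_m1; have C_m2 := in_C_mask size_m2.
rewrite mask_m1 in C_m1; rewrite mask_m2 in C_m2.
by rewrite (C_eq_v _ C_m1) (C_eq_v _ C_m2) eqxx.
Qed.

Lemma letter_square_counterexample (Sigma : finType) (w : seq Sigma) :
  has_letter_square w ->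
  exists u, [/\ subseq u w, C_card_one w u & ~ unique_embedding u w].
Proof.
case=> a /infixP [w1 [w2 w_def]].
pose m (b : bool) := nseq (size w1) true ++ [:: b, ~~ b & nseq (size w2) true].
have size_m b : size (m b) = size w by rewrite w_def !size_cat /= !size_nseq.
have mask_m b : mask (m b) w = w1 ++ a :: w2.
  by rewrite w_def mask_cat ?size_nseq // mask_true //; case: b; rewrite /= mask_true.
have mask_negb_m b : mask (map negb (m b)) w = [:: a].
  rewrite w_def map_cat mask_cat ?size_map ?size_nseq // map_nseq mask_false.
  by case: b; rewrite /= map_nseq mask_false.
exists (w1 ++ a :: w2); split.
- by rewrite -(mask_m true) mask_subseq.
- exists [:: a]; split.
    by rewrite -(mask_m true) -(mask_negb_m true); exact: in_C_mask.
  move=> v [_ /in_shuffleP [m' [size_m' mask_m' mask_negb_m']]].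
  apply: perm_small_eq => //; rewrite -(perm_cat2l (w1 ++ a :: w2)).
  rewrite -{1}mask_m' -mask_negb_m' -(mask_m true) -(mask_negb_m true).
  apply: (@perm_trans _ w); last exact: perm_mask_negb.
  by rewrite perm_sym perm_mask_negb.
move=> [_ uniq_e].
have [e1 emb_e1 mask_e1] := embedding_of_mask (size_m true) (mask_m true).
have [e2 emb_e2 mask_e2] := embedding_of_mask (size_m false) (mask_m false).
have := eq_emb_mask (uniq_e e1 e2 emb_e1 emb_e2).
by rewrite mask_e1 mask_e2 => /eqP; rewrite /m eqseq_cat // eqseq_cons andbF.
Qed.

Theorem proposition30 (Sigma : finType) (w : seq Sigma) :
  ~ has_letter_square w <->
  (forall u : seq Sigma, subseq u w -> C_card_one w u -> unique_embedding u w).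
Proof.
split=> [sqfree u|unique_w sq_w]; first exact: unique_embedding_of_C_card_one.
have [u [sub_u C_u not_unique_u]] := letter_square_counterexample sq_w.
exact/not_unique_u/unique_w.
Qed.
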